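(* If an atomic flow $A$ is cycle-free and $A\to_{\mathsf w}^\star B$, then $B$ is cycle-free.
   Context: An atomic flow is a tuple $(V,E,\eta,up,lo)$: finite sets of vertices and edges, a labelling of vertices by interaction, cut, weakening, coweakening, contraction or cocontraction, and maps $up:E\to V\cup\{\top\}$, $lo:E\to V\cup\{\bot\}$. Upper edges of $\nu$: $lo(\epsilon)=\nu$; lower edges: $up(\epsilon)=\nu$. (Upper, lower) edge numbers: $(0,2)$ interaction, $(2,0)$ cut, $(0,1)$ weakening, $(1,0)$ coweakening, $(2,1)$ contraction, $(1,2)$ cocontraction; no directed cycles; there is $\pi:E\to\{+,-\}$ giving all edges of a (co)contraction the same sign and the two edges of an interaction/cut different signs. A path from $\nu$ to $\nu'$ is a sequence of edges $\epsilon_1,\dots,\epsilon_h$ with $lo(\epsilon_i)=up(\epsilon_{i+1})$, $up(\epsilon_1)=\nu$, $lo(\epsilon_h)=\nu'$; its reversal is a path from $\nu'$ to $\nu$. An $\mathsf{ai}$-path from $\nu$ to $\nu'$ is either a path from $\nu$ to $\nu'$ or a sequence $\epsilon_1,\dots,\epsilon_k,\epsilon_{k+1},\dots,\epsilon_h$ with $\epsilon_k\neq\epsilon_{k+1}$ such that, for some interaction or cut vertex $\nu''$, $\epsilon_1,\dots,\epsilon_k$ is an $\mathsf{ai}$-path from $\nu$ to $\nu''$ and $\epsilon_{k+1},\dots,\epsilon_h$ is an $\mathsf{ai}$-path from $\nu''$ to $\nu'$. An $\mathsf{ai}$-cycle is an $\mathsf{ai}$-path from a vertex to itself in which no edge appears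 twice. A flow is cycle-free if it has no $\mathsf{ai}$-cycle. $\to_{\mathsf w}^\star$ is the reflexive-transitive closure of $\to_{\mathsf w}$, where $A\to_{\mathsf w}B$ means $B$ results from $A$ by one application of one of these subgraph replacements: (i) a weakening whose lower edge is an upper edge of a contraction: delete both, merging the contraction's other upper edge and its lower edge into one edge; (ii) a coweakening whose upper edge is a lower edge of a cocontraction: delete both, merging the cocontraction's upper edge and other lower edge; (iii) a weakening whose lower edge is an upper edge of a cut: delete both, the cut's other upper edge becoming the upper edge of a new coweakening; (iv) an interaction one of whose lower edges is the upper edge of a coweakening: delete both, the other lower edge becoming the lower edge of a new weakening; (v) an edge from a weakening to a coweakening: delete it and both vertices; (vi) a weakening whose lower edge is the upper edge of a cocontraction: replace by two new weakenings whose lower edges are the cocontraction's lower edges; (vii) a coweakening whose upper edge is the lower edge of a contraction: replace by two new coweakenings whose upper edges are the contraction's upper edges. *)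

From Stdlib Require Export Relations.
From HB Require Import structures.
From mathcomp Require Import all_boot.
Set Implicit Arguments. Unset Strict Implicit. Unset Printing Implicit Defensive.

Inductive vkind := Int | Cut | Wk | Cowk | Ctr | Coctr.

(* Endpoints of edges: a vertex (named by a nat), or top / bottom. *)
Inductive node := Top | Bot | Vx of nat.

Definition node_eqb (x y : node) : bool :=
  match x, y with
  | Top, Top => true | Bot, Bot => true
  | Vx m, Vx n => m == n | _, _ => false end.

Lemma node_eqP : Equality.axiom node_eqb.
Proof.
case=> [||m] [||n] /=; try by constructor.
by apply: (iffP eqP) => [->|[]].
Qed.

HB.instance Definition _ := hasDecEq.Build node node_eqP.

(* A (candidate) atomic flow: finite lists of vertex and edge names, labelling,
   and the maps up, lo (only their values on fV / fE are meaningful). *)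
Record flow := Flow {
  fV : seq nat; fE : seq nat;
  lab : nat -> vkind;
  up : nat -> node; lo : nat -> node }.

Definition nupper (k : vkind) : nat :=
  match k with Int => 0 | Cut => 2 | Wk => 0 | Cowk => 1 | Ctr => 2 | Coctr => 1 end.
Definition nlower (k : vkind) : nat :=
  match k with Int => 2 | Cut => 0 | Wk => 1 | Cowk => 0 | Ctr => 1 | Coctr => 2 end.

Fixpoint walk (F : flow) (z : node) (s : seq nat) (y : node) : Prop :=
  match s with
  | [::] => z = y
  | e :: s' => e \in fE F /\ up F e = z /\ walk F (lo F e) s' y
  end.

Definition dpath (F : flow) (x : node) (s : seq nat) (y : node) : Prop :=
  s <> [::] /\ walk F x s y.

Definition fpath (F : flow) (x : node) (s : seq nat) (y : node) : Prop :=
  dpath F x s y \/ dpath F y (rev s) x.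

Definition is_flow (F : flow) : Prop :=
  (uniq (fV F) /\ uniq (fE F) /\
   (forall e, e \in fE F ->
      up F e <> Bot /\ lo F e <> Top /\
      (forall v, up F e = Vx v -> v \in fV F) /\
      (forall v, lo F e = Vx v -> v \in fV F)) /\
   (forall v, v \in fV F ->
      count (fun e => lo F e == Vx v) (fE F) = nupper (lab F v) /\
      count (fun e => up F e == Vx v) (fE F) = nlower (lab F v)) /\
   (~ exists v s, dpath F (Vx v) s (Vx v))  /\
   (exists pi : nat -> bool, forall v, v \in fV F ->
      let inc e := (e \in fE F) && ((up F e == Vx v) || (lo F e == Vx v)) in
      ((lab F v = Ctr \/ lab F v = Coctr) ->
         forall e1 e2, inc e1 -> inc e2 -> pi e1 = pi e2) /\
      ((lab F v = Int \/ lab F v = Cut) ->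
         forall e1 e2, inc e1 -> inc e2 -> e1 <> e2 -> pi e1 <> pi e2))).

Inductive aipath (F : flow) : node -> seq nat -> node -> Prop :=
| AIpath x s y : fpath F x s y -> aipath F x s y
| AIcat x z y s1 a b s2 :
    aipath F x (rcons s1 a) (Vx z) ->
    aipath F (Vx z) (b :: s2) y ->
    z \in fV F -> (lab F z = Int \/ lab F z = Cut) ->
    a <> b ->
    aipath F x (rcons s1 a ++ b :: s2) y.

Definition aicycle (F : flow) (v : nat) (s : seq nat) : Prop :=
  (v \in fV F /\ aipath F (Vx v) s (Vx v) /\ uniq s).

Definition cycle_free (F : flow) : Prop := ~ exists v s, aicycle F v s.

(* B is obtained from A by keeping the vertices in keepV and the edges in keepE,
   adding the fresh vertices newV (labelled by newlab) and fresh edges newE,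
   with the endpoints of all edges of B given by nup / nlo. *)
Definition replaced (A B : flow) (keepV : pred nat) (newV : seq nat)
    (newlab : nat -> vkind) (keepE : pred nat) (newE : seq nat)
    (nup nlo : nat -> node) : Prop :=
  (uniq (fV B) /\ uniq (fE B) /\ uniq newV /\ uniq newE /\
      (forall v, v \in newV -> v \notin fV A) /\
      (forall e, e \in newE -> e \notin fE A) /\
      (forall v, v \in fV B <-> ((v \in fV A) && keepV v) \/ v \in newV) /\
      (forall e, e \in fE B <-> ((e \in fE A) && keepE e) \/ e \in newE) /\
      (forall v, v \in fV B -> lab B v = if v \in newV then newlab v else lab A v)  /\
      (forall e, e \in fE B -> up B e = nup e /\ lo B e = nlo e)).

Definition isv (A : flow) (v : nat) (k : vkind) := v \in fV A /\ lab A v = k.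

Definition wstep (A B : flow) : Prop :=
  (exists w c e1 e2 e3 f,
     (isv A w Wk /\ isv A c Ctr /\ e1 \in fE A /\ e2 \in fE A /\ e3 \in fE A /\
         up A e1 = Vx w /\ lo A e1 = Vx c /\ lo A e2 = Vx c /\ e2 <> e1 /\ up A e3 = Vx c  /\
         replaced A B (predC (pred2 w c)) [::] (fun _ => Wk)
           (predC [pred e | (e == e1) || (e == e2) || (e == e3)]) [:: f]
           (fun e => if e == f then up A e2 else up A e)
           (fun e => if e == f then lo A e3 else lo A e))) \/
  (exists cw cc e1 e0 e2 f,
     (isv A cw Cowk /\ isv A cc Coctr /\ e1 \in fE A /\ e0 \in fE A /\ e2 \in fE A /\
         up A e1 = Vx cc /\ lo A e1 = Vx cw /\ lo A e0 = Vx cc /\ up A e2 = Vx cc /\ e2 <> e1  /\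
         replaced A B (predC (pred2 cw cc)) [::] (fun _ => Wk)
           (predC [pred e | (e == e0) || (e == e1) || (e == e2)]) [:: f]
           (fun e => if e == f then up A e0 else up A e)
           (fun e => if e == f then lo A e2 else lo A e))) \/
  (exists w k e1 e2 u,
     (isv A w Wk /\ isv A k Cut /\ e1 \in fE A /\ e2 \in fE A /\
         up A e1 = Vx w /\ lo A e1 = Vx k /\ lo A e2 = Vx k /\ e2 <> e1  /\
         replaced A B (predC (pred2 w k)) [:: u] (fun _ => Cowk)
           (predC (pred1 e1)) [::]
           (up A)
           (fun e => if e == e2 then Vx u else lo A e))) \/
  (exists i cw e1 e2 u,
     (isv A i Int /\ isv A cw Cowk /\ e1 \in fE A /\ e2 \in fE A /\
         up A e1 = Vx i /\ lo A e1 = Vx cw /\ up A e2 = Vx i /\ e2 <> e1  /\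
         replaced A B (predC (pred2 i cw)) [:: u] (fun _ => Wk)
           (predC (pred1 e1)) [::]
           (fun e => if e == e2 then Vx u else up A e)
           (lo A))) \/
  (exists w cw e,
     (isv A w Wk /\ isv A cw Cowk /\ e \in fE A /\ up A e = Vx w /\ lo A e = Vx cw  /\
         replaced A B (predC (pred2 w cw)) [::] (fun _ => Wk)
           (predC (pred1 e)) [::] (up A) (lo A))) \/
  (exists w cc e0 e1 e2 u1 u2,
     (isv A w Wk /\ isv A cc Coctr /\ e0 \in fE A /\ e1 \in fE A /\ e2 \in fE A /\
         up A e0 = Vx w /\ lo A e0 = Vx cc /\ up A e1 = Vx cc /\ up A e2 = Vx cc /\ e1 <> e2  /\
         replaced A B (predC (pred2 w cc)) [:: u1; u2] (fun _ => Wk)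
           (predC (pred1 e0)) [::]
           (fun e => if e == e1 then Vx u1 else if e == e2 then Vx u2 else up A e)
           (lo A))) \/
  (exists cw c e0 e1 e2 u1 u2,
     (isv A cw Cowk /\ isv A c Ctr /\ e0 \in fE A /\ e1 \in fE A /\ e2 \in fE A /\
         up A e0 = Vx c /\ lo A e0 = Vx cw /\ lo A e1 = Vx c /\ lo A e2 = Vx c /\ e1 <> e2  /\
         replaced A B (predC (pred2 cw c)) [:: u1; u2] (fun _ => Cowk)
           (predC (pred1 e0)) [::]
           (up A)
           (fun e => if e == e1 then Vx u1 else if e == e2 then Vx u2 else lo A e))).

Definition wstar : flow -> flow -> Prop := clos_refl_trans flow wstep.

(* A weakening step deletes a weakening or coweakening together with its
   neighbour and reconnects what is left, so the result B can be simulated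
   inside A: each edge of B goes to a nonempty walk of A (a kept edge to itself,
   a merged edge to the two edges it replaces) and each vertex of B to a vertex
   of A (a new (co)weakening to the deleted neighbour).  Images of distinct
   edges are disjoint and interaction and cut vertices go to interaction and cut
   vertices, so an ai-cycle of B is carried to an ai-cycle of A.  Steps (ii),
   (iv) and (vii) are steps (i), (iii) and (vi) of the flow turned upside down.
   Along a sequence of steps one also keeps the incidence and degree conditions
   of an atomic flow, which fix the shape of the neighbourhood of each redex. *)

From Pilot Require Import Defs.
From mathcomp Require Import all_boot.
Set Implicit Arguments. Unset Strict Implicit. Unset Printing Implicit Defensive.

Lemma count_eq0_memN (T : eqType) (p : pred T) s x : count p s = 0 -> x \in s -> ~~ p x.
Proof.
move=> Hc Hx; apply/negP => Hp.
have: has p s by apply/hasP; exists x.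
by rewrite has_count Hc.
Qed.

Lemma count_eq1_mem (T : eqType) (p : pred T) s a x :
  count p s = 1 -> a \in s -> p a -> x \in s -> p x -> x = a.
Proof.
rewrite -size_filter => Hc Ha Hpa Hx Hpx.
have: a \in [seq y <- s | p y] by rewrite mem_filter Hpa.
have: x \in [seq y <- s | p y] by rewrite mem_filter Hpx.
by case: [seq y <- s | p y] Hc => [|y []] //= _; rewrite !inE => /eqP -> /eqP.
Qed.

Lemma count_eq2_mem (T : eqType) (p : pred T) s a b x :
  count p s = 2 -> a \in s -> p a -> b \in s -> p b -> a <> b ->
  x \in s -> p x -> x = a \/ x = b.
Proof.
rewrite -size_filter => Hc Ha Hpa Hb Hpb Hab Hx Hpx.
have: a \in [seq y <- s | p y] by rewrite mem_filter Hpa.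
have: b \in [seq y <- s | p y] by rewrite mem_filter Hpb.
have: x \in [seq y <- s | p y] by rewrite mem_filter Hpx.
case: [seq y <- s | p y] Hc => [|y [|z []]] //= _; rewrite !inE.
by do 3 case/orP=> /eqP ?; subst; intuition.
Qed.

Lemma count_in_pred1 (T : eqType) (p : pred T) s a :
  uniq s -> a \in s -> {in s, forall x, p x = (x == a)} -> count p s = 1.
Proof. by move=> Us Ha /eq_in_count ->; rewrite (count_uniq_mem _ Us) Ha. Qed.

Lemma count_in_pred0 (T : eqType) (p : pred T) s :
  {in s, forall x, ~~ p x} -> count p s = 0.
Proof. by move=> Hp; rewrite (eq_in_count (a2 := pred0)) ?count_pred0 // => x /Hp /negbTE. Qed.

Definition node_map (phi : nat -> nat) (x : node) : node :=
  if x is Vx v then Vx (phi v) else x.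

Lemma node_map_id x : node_map id x = x.
Proof. by case: x. Qed.

Lemma eq_Vx m n : (Vx m == Vx n) = (m == n).
Proof. by []. Qed.

Lemma walk_cat F x s z s' y : walk F x s z -> walk F z s' y -> walk F x (s ++ s') y.
Proof. by elim: s x => [|e s IH] x /= => [->|[He [Hu /IH Hw]] /Hw]. Qed.

Lemma walk_mem F x s y : walk F x s y -> {subset s <= fE F}.
Proof.
elim: s x => [|e s IH] x //= [He [_ /IH Hs]] z.
by rewrite inE => /predU1P [->|/Hs].
Qed.

(** * Simulation *)

Section Simulation.

Variables (A B : flow) (phi : nat -> nat) (img : nat -> seq nat).

Hypothesis img_neq0 : forall e, e \in fE B -> img e != [::].
Hypothesis img_uniq : forall e, e \in fE B -> uniq (img e).
Hypothesis img_walk : forall e, e \in fE B ->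
  walk A (node_map phi (up B e)) (img e) (node_map phi (lo B e)).
Hypothesis img_disjoint : forall e e', e \in fE B -> e' \in fE B -> e <> e' ->
  forall x, x \in img e -> x \notin img e'.
Hypothesis phi_vertex : forall v, v \in fV B -> phi v \in fV A.
Hypothesis phi_junction : forall z, z \in fV B -> lab B z = Int \/ lab B z = Cut ->
  lab A (phi z) = Int \/ lab A (phi z) = Cut.

(* Each edge of [s] contributes [img e] or its reversal; stating this as
   [perm_eq] keeps exactly the information the proofs use. *)
Inductive image_seq : seq nat -> seq nat -> Prop :=
| image_nil : image_seq [::] [::]
| image_cons e u s t : e \in fE B -> perm_eq u (img e) -> image_seq s t ->
    image_seq (e :: s) (u ++ t).

Lemma image_seq_cat s1 t1 s2 t2 :
  image_seq s1 t1 -> image_seq s2 t2 -> image_seq (s1 ++ s2) (t1 ++ t2).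
Proof.
by elim=> // e u s t He Hu _ IH /IH Hst; rewrite -catA; apply: image_cons.
Qed.

Lemma image_seq_sub s t : image_seq s t -> {subset s <= fE B}.
Proof. by elim=> // e u s' t' He _ _ IH x; rewrite inE => /predU1P [->|/IH]. Qed.

Lemma image_seq_mem s t x : image_seq s t -> x \in t -> exists2 e, e \in s & x \in img e.
Proof.
elim=> // e u s' t' He Hu _ IH; rewrite mem_cat => /orP [Hx|/IH [e' He' Hx]].
  by exists e; rewrite ?mem_head // -(perm_mem Hu).
by exists e'; rewrite // inE He' orbT.
Qed.

Lemma image_seq_uniq s t : image_seq s t -> uniq s -> uniq t.
Proof.
elim=> // e u s' t' He Hu Hst IH /= /andP [Hns /IH Ht].
rewrite cat_uniq (perm_uniq Hu) img_uniq // Ht andbT /=.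
apply/hasPn => x /(image_seq_mem Hst) [e' He' Hx]; rewrite (perm_mem Hu).
apply: img_disjoint Hx; [exact: image_seq_sub Hst _ He'|exact: He|].
by move=> E; move: Hns; rewrite -E He'.
Qed.

Lemma image_seq_head b s t :
  image_seq (b :: s) t -> exists b' t', t = b' :: t' /\ b' \in img b.
Proof.
move=> H; inversion H as [|e u s' t' He Hu]; subst.
case: u Hu {H} => [|x u] Hu.
  by move: (img_neq0 He); rewrite -size_eq0 -(perm_size Hu).
by exists x, (u ++ t'); rewrite -(perm_mem Hu) mem_head.
Qed.

Lemma image_seq_last s a t :
  image_seq (rcons s a) t -> exists t' a', t = rcons t' a' /\ a' \in img a.
Proof.
elim: s t => [|e s IH] t /= H; inversion H as [|e' u s' t0 He Hu Hst]; subst.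
- inversion Hst; subst; rewrite cats0.
  case/lastP: u Hu {H Hst} => [|u x] Hu.
    by move: (img_neq0 He); rewrite -size_eq0 -(perm_size Hu).
  by exists u, x; rewrite -(perm_mem Hu) mem_rcons mem_head.
- have [t' [a' [-> Ha]]] := IH _ Hst.
  by exists (u ++ t'), a'; rewrite rcons_cat.
Qed.

Lemma walk_image x s y :
  walk B x s y -> walk A (node_map phi x) (flatten (map img s)) (node_map phi y).
Proof.
elim: s x => [|e s IH] x /= => [->//|[He [<- /IH Hw]]].
exact: walk_cat (img_walk He) Hw.
Qed.

Lemma image_seq_flatten s : {subset s <= fE B} -> image_seq s (flatten (map img s)).
Proof.
elim: s => [|e s IH] Hs /=; first exact: image_nil.
apply: image_cons; [exact: Hs (mem_head _ _)|exact: perm_refl|].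
by apply: IH => x Hx; apply: Hs; rewrite inE Hx orbT.
Qed.

Lemma image_seq_flatten_rev s :
  {subset s <= fE B} -> image_seq s (rev (flatten (map img (rev s)))).
Proof.
elim: s => [|e s IH] Hs /=; first exact: image_nil.
rewrite rev_cons map_rcons flatten_rcons rev_cat.
apply: image_cons; [exact: Hs (mem_head _ _)|by rewrite perm_rev|].
by apply: IH => x Hx; apply: Hs; rewrite inE Hx orbT.
Qed.

Lemma flatten_image_neq0 s :
  {subset s <= fE B} -> s <> [::] -> flatten (map img s) <> [::].
Proof.
case: s => [//|e s] Hs _ /=.
by have := img_neq0 (Hs e (mem_head _ _)); case: (img e).
Qed.

Lemma aipath_image x s y : aipath B x s y ->
  exists t, aipath A (node_map phi x) t (node_map phi y) /\ image_seq s t.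
Proof.
elim=> {x s y} [x s y [[Hne Hw]|[Hne Hw]]|x z y s1 a b s2 _ [t1 [H1 R1]] _ [t2 [H2 R2]] Hz Hl Hab].
- have Hs := walk_mem Hw.
  exists (flatten (map img s)); split; last exact: image_seq_flatten.
  by apply: AIpath; left; split; [exact: flatten_image_neq0|exact: walk_image].
- have Hs : {subset s <= fE B} by move=> e He; apply: (walk_mem Hw); rewrite mem_rev.
  exists (rev (flatten (map img (rev s)))); split; last exact: image_seq_flatten_rev.
  apply: AIpath; right; rewrite revK; split; last exact: walk_image.
  by apply: flatten_image_neq0; [exact: walk_mem Hw|exact: Hne].
- have [t1' [a' [E1 Ha']]] := image_seq_last R1.
  have [b' [t2' [E2 Hb']]] := image_seq_head R2.
  exists (t1 ++ t2); split; last exact: image_seq_cat.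
  rewrite E1 E2; apply: AIcat (phi_vertex Hz) (phi_junction Hz Hl) _; rewrite -?E1 -?E2 //.
  have Ha : a \in fE B by apply: (image_seq_sub R1); rewrite mem_rcons mem_head.
  have Hb : b \in fE B by apply: (image_seq_sub R2); rewrite mem_head.
  by move=> Eab; have := img_disjoint Ha Hb Hab Ha'; rewrite Eab Hb'.
Qed.

Lemma cycle_free_image : cycle_free A -> cycle_free B.
Proof.
move=> cfA [v [s [Hv [Hp Hu]]]]; apply: cfA.
have [t [Ht Rt]] := aipath_image Hp.
by exists (phi v), t; split; [exact: phi_vertex|split; [|exact: image_seq_uniq Rt Hu]].
Qed.

End Simulation.

Lemma replaced_cycle_free A B keepV newV newlab keepE newE nup nlo phi img :
  replaced A B keepV newV newlab keepE newE nup nlo ->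
  (forall v, v \notin newV -> phi v = v) ->
  (forall v, v \in newV -> phi v \in fV A /\ newlab v <> Int /\ newlab v <> Cut) ->
  (forall e, e \notin newE -> img e = [:: e]) ->
  (forall e, e \in newE -> img e != [::] /\ uniq (img e) /\
     {subset img e <= [pred x | (x \in fE A) && ~~ keepE x]}) ->
  (forall e e', e \in newE -> e' \in newE -> e <> e' ->
     forall x, x \in img e -> x \notin img e') ->
  (forall e, e \in fE B -> walk A (node_map phi (nup e)) (img e) (node_map phi (nlo e))) ->
  cycle_free A -> cycle_free B.
Proof.
move=> [_ [_ [_ [_ [_ [_ [mV [mE [lB eB]]]]]]]]] phi_old phi_new img_old img_new img_disj img_walk.
have kept e : e \in fE B -> e \notin newE -> keepE e.
  by move=> /mE [/andP [_ ->]|->].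
have old_vertex v : v \in fV B -> v \notin newV -> v \in fV A.
  by move=> /mV [/andP [->]|->].
apply: (cycle_free_image (phi:=phi) (img:=img)) => [e He|e He|e He|e e' He He' Hne x|v Hv|z Hz].
- by case: (boolP (e \in newE)) => [/img_new []|/img_old ->].
- by case: (boolP (e \in newE)) => [/img_new [_ []]|/img_old ->].
- by have [-> ->] := eB e He; apply: img_walk.
- case: (boolP (e \in newE)) => [Hn|Hn]; case: (boolP (e' \in newE)) => [Hn'|Hn'].
  + exact: img_disj.
  + rewrite (img_old _ Hn') inE => Hx; apply: contraL (kept _ He' Hn') => /eqP <-.
    by have /andP [] := proj2 (proj2 (img_new _ Hn)) x Hx.
  + rewrite (img_old _ Hn) inE => /eqP ->; apply/negP => Hx.
    by have /andP [_] := proj2 (proj2 (img_new _ Hn')) e Hx; rewrite kept.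
  + by rewrite (img_old _ Hn) (img_old _ Hn') !inE => /eqP ->; apply/eqP.
- case: (boolP (v \in newV)) => [/phi_new [//]|Hn].
  by rewrite phi_old // old_vertex.
- rewrite (lB _ Hz); case: (boolP (z \in newV)) => [/phi_new [_ [H1 H2]] []//|Hn Hl].
  by rewrite phi_old.
Qed.

(** * Well-formed flows *)

Definition indeg (F : flow) (v : nat) : nat := count (fun e => lo F e == Vx v) (fE F).
Definition outdeg (F : flow) (v : nat) : nat := count (fun e => up F e == Vx v) (fE F).

Definition well_formed (F : flow) : Prop :=
  [/\ uniq (fE F),
      forall e v, e \in fE F -> up F e = Vx v \/ lo F e = Vx v -> v \in fV F &
      forall v, v \in fV F ->
        indeg F v = nupper (lab F v) /\ outdeg F v = nlower (lab F v)].

Lemma is_flow_well_formed F : is_flow F -> well_formed F.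
Proof.
move=> [_ [uE [Hend [Hdeg _]]]]; split=> // e v He.
by have [_ [_ [H1 H2]]] := Hend e He; case; [exact: H1|exact: H2].
Qed.

Section Incidence.

Variables (F : flow) (v : nat) (k : vkind).
Hypotheses (wfF : well_formed F) (Hv : isv F v k).

Lemma upper_edge0 e : nupper k = 0 -> e \in fE F -> lo F e != Vx v.
Proof.
have [_ _ deg] := wfF; case: Hv => HvF <- Hk He.
exact: count_eq0_memN (etrans (proj1 (deg v HvF)) Hk) He.
Qed.

Lemma upper_edge1 a e : nupper k = 1 -> a \in fE F -> lo F a = Vx v ->
  e \in fE F -> lo F e = Vx v -> e = a.
Proof.
have [_ _ deg] := wfF; case: Hv => HvF <- Hk Ha Hla He Hle.
by apply: count_eq1_mem (etrans (proj1 (deg v HvF)) Hk) Ha _ He _; rewrite /= ?Hla ?Hle.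
Qed.

Lemma upper_edge2 a b e : nupper k = 2 -> a \in fE F -> lo F a = Vx v ->
  b \in fE F -> lo F b = Vx v -> a <> b -> e \in fE F -> lo F e = Vx v -> e = a \/ e = b.
Proof.
have [_ _ deg] := wfF; case: Hv => HvF <- Hk Ha Hla Hb Hlb Hab He Hle.
apply: count_eq2_mem (etrans (proj1 (deg v HvF)) Hk) Ha _ Hb _ Hab He _;
  by rewrite /= ?Hla ?Hlb ?Hle.
Qed.

Lemma lower_edge0 e : nlower k = 0 -> e \in fE F -> up F e != Vx v.
Proof.
have [_ _ deg] := wfF; case: Hv => HvF <- Hk He.
exact: count_eq0_memN (etrans (proj2 (deg v HvF)) Hk) He.
Qed.

Lemma lower_edge1 a e : nlower k = 1 -> a \in fE F -> up F a = Vx v ->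
  e \in fE F -> up F e = Vx v -> e = a.
Proof.
have [_ _ deg] := wfF; case: Hv => HvF <- Hk Ha Hua He Hue.
by apply: count_eq1_mem (etrans (proj2 (deg v HvF)) Hk) Ha _ He _; rewrite /= ?Hua ?Hue.
Qed.

Lemma lower_edge2 a b e : nlower k = 2 -> a \in fE F -> up F a = Vx v ->
  b \in fE F -> up F b = Vx v -> a <> b -> e \in fE F -> up F e = Vx v -> e = a \/ e = b.
Proof.
have [_ _ deg] := wfF; case: Hv => HvF <- Hk Ha Hua Hb Hub Hab He Hue.
apply: count_eq2_mem (etrans (proj2 (deg v HvF)) Hk) Ha _ Hb _ Hab He _;
  by rewrite /= ?Hua ?Hub ?Hue.
Qed.

End Incidence.

Lemma no_loop F e v : cycle_free F -> v \in fV F -> e \in fE F ->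
  up F e = Vx v -> lo F e <> Vx v.
Proof.
move=> cfF Hv He Hu Hl; apply: cfF; exists v, [:: e]; do 2 split=> //.
by apply: AIpath; left; split.
Qed.

Lemma node_map_ends F phi e : well_formed F -> e \in fE F -> {in fV F, phi =1 id} ->
  node_map phi (up F e) = up F e /\ node_map phi (lo F e) = lo F e.
Proof.
move=> [_ endF _] He Hphi.
split; [case Hu: (up F e) => [||v]|case Hl: (lo F e) => [||v]] => //=;
  by rewrite Hphi // (endF e v); auto.
Qed.

Lemma kept_vertex (V : seq nat) x y v :
  v \in V -> v <> x -> v <> y -> (v \in V) && predC (pred2 x y) v.
Proof. by move=> -> /eqP ? /eqP ?; rewrite /= negb_or; apply/andP. Qed.

Section Replacement.

Variables (A B : flow) (keepV : pred nat) (newV : seq nat) (newlab : nat -> vkind).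
Variables (keepE : pred nat) (RE newE : seq nat) (nup nlo : nat -> node).
Hypothesis Hrep : replaced A B keepV newV newlab keepE newE nup nlo.
Hypothesis keepE_RE : forall e, keepE e = (e \notin RE).
Hypothesis uniqA : uniq (fE A).
Hypothesis uniqRE : uniq RE.
Hypothesis subRE : {subset RE <= fE A}.

Lemma perm_replaced_edges :
  perm_eq (fE B) ([seq e <- fE A | e \notin RE] ++ newE).
Proof.
have [_ [uE [_ [unE [_ [fE' [_ [mE _]]]]]]]] := Hrep.
apply: uniq_perm => //.
  rewrite cat_uniq filter_uniq ?unE ?andbT //=; apply/hasPn => e /fE' HeA.
  by rewrite mem_filter (negbTE HeA) andbF.
move=> e; rewrite mem_cat mem_filter andbC -keepE_RE; apply/idP/idP.
  by case/mE => [->|->]; rewrite ?orbT.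
by case/orP => H; apply/mE; [left|right].
Qed.

Lemma perm_deleted_edges : perm_eq (fE A) ([seq e <- fE A | e \notin RE] ++ RE).
Proof.
apply: uniq_perm => //.
  rewrite cat_uniq filter_uniq ?uniqRE ?andbT //=; apply/hasPn => e HeR.
  by rewrite mem_filter HeR.
move=> e; rewrite mem_cat mem_filter; case: (boolP (e \in RE)) => [/subRE -> //|_].
by rewrite orbF.
Qed.

Lemma count_replaced (gA gB ng : nat -> node) (P : pred node) :
  {in fE B, gB =1 ng} ->
  {in fE A, forall e, e \notin RE -> P (ng e) = P (gA e)} ->
  count (P \o ng) newE = count (P \o gA) RE ->
  count (P \o gB) (fE B) = count (P \o gA) (fE A).
Proof.
move=> HgB Hkept Hnew; rewrite (eq_in_count (a2 := P \o ng)); last first.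
  by move=> e /HgB /= ->.
rewrite (permP perm_replaced_edges) (permP perm_deleted_edges) !count_cat Hnew.
congr (_ + _); apply: eq_in_count => e; rewrite mem_filter => /andP [HeR HeA].
exact: Hkept.
Qed.

Lemma replaced_well_formed :
  well_formed A ->
  (forall e v, e \in fE B -> nup e = Vx v \/ nlo e = Vx v ->
     (v \in fV A) && keepV v \/ v \in newV) ->
  (forall v, v \in fV A -> keepV v -> {in fE A, forall e, e \notin RE ->
     (nlo e == Vx v) = (lo A e == Vx v) /\ (nup e == Vx v) = (up A e == Vx v)}) ->
  (forall v, v \in fV A -> keepV v ->
     count (fun e => nlo e == Vx v) newE = count (fun e => lo A e == Vx v) RE /\
     count (fun e => nup e == Vx v) newE = count (fun e => up A e == Vx v) RE) ->
  (forall v, v \in newV ->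
     count (fun e => nlo e == Vx v) (fE B) = nupper (newlab v) /\
     count (fun e => nup e == Vx v) (fE B) = nlower (newlab v)) ->
  well_formed B.
Proof.
have [_ [uE [_ [_ [_ [_ [mV [_ [lB eB]]]]]]]]] := Hrep.
move=> [_ _ degA] ends kept_ends kept_deg new_deg; split=> [//|e v He Hv|v Hv].
  by apply/mV; apply: (ends e) => //; have [<- <-] := eB e He.
rewrite (lB _ Hv); case: ifP => [/new_deg [Hin Hout]|Hn].
  rewrite /indeg /outdeg -Hin -Hout.
  by split; apply: eq_in_count => e /eB [Hu Hl] /=; rewrite ?Hu ?Hl.
have /andP [HvA Hk] : (v \in fV A) && keepV v by case/mV: Hv => [|/[!Hn]].
have [Hin Hout] := degA v HvA; have [Hc1 Hc2] := kept_deg v HvA Hk.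
rewrite -Hin -Hout; split.
- apply: (count_replaced (ng := nlo) (P := pred1 (Vx v))) => // [e /eB [] //|e He HeR].
  by rewrite /= (proj1 (kept_ends v HvA Hk e He HeR)).
- apply: (count_replaced (ng := nup) (P := pred1 (Vx v))) => // [e /eB [] //|e He HeR].
  by rewrite /= (proj2 (kept_ends v HvA Hk e He HeR)).
Qed.

End Replacement.

Lemma replaced_ext A B keepV newV newlab keepE newE nup nlo
    keepV' newlab' keepE' nup' nlo' :
  keepV =1 keepV' -> {in newV, newlab =1 newlab'} -> keepE =1 keepE' ->
  nup =1 nup' -> nlo =1 nlo' ->
  replaced A B keepV newV newlab keepE newE nup nlo ->
  replaced A B keepV' newV newlab' keepE' newE nup' nlo'.
Proof.
move=> HkV Hl HkE Hu Hd [uV [uE [unV [unE [fV' [fE' [mV [mE [lB eB]]]]]]]]].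
do 6 (split; first done); split; last split; last split.
- by move=> v; rewrite -HkV; exact: mV.
- by move=> e; rewrite -HkE; exact: mE.
- by move=> v /lB ->; case: ifP => // /Hl.
- by move=> e /eB [-> ->]; rewrite Hu Hd.
Qed.

(** * Duality *)

Definition dual_kind (k : vkind) : vkind :=
  match k with
  | Int => Cut | Cut => Int | Wk => Cowk | Cowk => Wk | Ctr => Coctr | Coctr => Ctr
  end.

Definition dual_node (x : node) : node :=
  match x with Top => Bot | Bot => Top | Vx v => Vx v end.

Lemma dual_kindK : involutive dual_kind. Proof. by case. Qed.
Lemma dual_nodeK : involutive dual_node. Proof. by case. Qed.

Definition flip (F : flow) : flow :=
  Flow (fV F) (fE F) (dual_kind \o lab F) (dual_node \o lo F) (dual_node \o up F).

Definition is_dual (F G : flow) : Prop :=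
  [/\ fV G = fV F, fE G = fE F, lab G =1 dual_kind \o lab F,
      up G =1 dual_node \o lo F & lo G =1 dual_node \o up F].

Lemma is_dual_flip F : is_dual F (flip F).
Proof. by []. Qed.

Lemma is_dual_sym F G : is_dual F G -> is_dual G F.
Proof.
move=> [HV HE Hl Hu Hd]; split=> // x /=.
- by rewrite Hl /= dual_kindK.
- by rewrite Hd /= dual_nodeK.
- by rewrite Hu /= dual_nodeK.
Qed.

Lemma isv_flip F v k : isv F v k -> isv (flip F) v (dual_kind k).
Proof. by case=> Hv Hl; split=> //=; rewrite Hl. Qed.

Section Duality.

Variables F G : flow.
Hypothesis FG : is_dual F G.

Lemma walk_dual x s y :
  walk F x s y -> walk G (dual_node y) (rev s) (dual_node x).
Proof.
have [_ HE _ Hu Hd] := FG.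
elim: s x => [|e s IH] x /= => [->//|[He [<- /IH Hw]]].
rewrite rev_cons -cats1; apply: walk_cat Hw _ => /=.
by rewrite HE Hu Hd.
Qed.

Lemma dpath_dual x s y :
  dpath F x s y -> dpath G (dual_node y) (rev s) (dual_node x).
Proof.
case=> Hne /walk_dual Hw; split=> //.
by case: s Hne {Hw} => // e s _; rewrite rev_cons; case: (rev s).
Qed.

Lemma fpath_dual x s y :
  Defs.fpath F x s y -> Defs.fpath G (dual_node x) s (dual_node y).
Proof.
case=> [/dpath_dual|/dpath_dual]; [right|rewrite revK; left] => //.
Qed.

Lemma aipath_dual x s y :
  aipath F x s y -> aipath G (dual_node x) s (dual_node y).
Proof.
have [HV _ Hl _ _] := FG.
elim=> {x s y} [x s y /fpath_dual|x z y s1 a b s2 _ H1 _ H2 Hz Hlz Hab].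
  exact: AIpath.
apply: AIcat H1 H2 _ _ Hab; first by rewrite HV.
by rewrite Hl /=; case: Hlz => ->; [right|left].
Qed.

End Duality.

Lemma cycle_free_dual F G : is_dual F G -> cycle_free F -> cycle_free G.
Proof.
move=> /is_dual_sym GF cfF [v [s [Hv [Hp Hu]]]]; apply: cfF; exists v, s.
have [HV _ _ _ _] := GF.
by split; [rewrite HV|split; [exact: aipath_dual Hp|]].
Qed.

Lemma dual_node_eqVx x v : (dual_node x == Vx v) = (x == Vx v).
Proof. by case: x. Qed.

Lemma well_formed_dual F G : is_dual F G -> well_formed F -> well_formed G.
Proof.
move=> [HV HE Hl Hu Hd] [uE Hend Hdeg]; split=> [|e v|v]; first by rewrite HE.
  rewrite HE HV Hu Hd /= => He Hv; apply: (Hend e) => //.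
  by case: Hv => /eqP; rewrite dual_node_eqVx => /eqP; [right|left].
rewrite HV => /Hdeg [Hin Hout]; rewrite /indeg /outdeg HE Hl /=.
under eq_count => e do rewrite Hd /= dual_node_eqVx.
under [X in _ /\ X = _]eq_count => e do rewrite Hu /= dual_node_eqVx.
by rewrite -/(indeg F v) -/(outdeg F v) Hin Hout; case: (lab F v).
Qed.

Lemma replaced_dual A B A' B' keepV newV newlab keepE newE nup nlo :
  is_dual A A' -> is_dual B B' ->
  replaced A B keepV newV newlab keepE newE nup nlo ->
  replaced A' B' keepV newV (dual_kind \o newlab) keepE newE
    (dual_node \o nlo) (dual_node \o nup).
Proof.
move=> [HVA HEA HlA _ _] [HVB HEB HlB HuB HdB].
move=> [uV [uE [unV [unE [fV' [fE' [mV [mE [lB eB]]]]]]]]].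
rewrite /replaced HVA HEA HVB HEB; do 8 (split; first done); split.
- by move=> v Hv; rewrite HlB HlA /= lB //; case: ifP.
- by move=> e He; rewrite HuB HdB /=; have [-> ->] := eB e He.
Qed.

Lemma step_flip A B :
  (well_formed (flip A) -> cycle_free (flip A) ->
     well_formed (flip B) /\ cycle_free (flip B)) ->
  well_formed A -> cycle_free A -> well_formed B /\ cycle_free B.
Proof.
have back := is_dual_sym (is_dual_flip B).
move=> Hstep /(well_formed_dual (is_dual_flip A)) wfA /(cycle_free_dual (is_dual_flip A)) cfA.
have [wfB cfB] := Hstep wfA cfA.
by split; [exact: well_formed_dual back wfB|exact: cycle_free_dual back cfB].
Qed.

(** * The weakening steps *)

Section WeakeningContraction.

Variables (A B : flow) (w c e1 e2 e3 f : nat).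
Hypotheses (Hw : isv A w Wk) (Hc : isv A c Ctr).
Hypotheses (E1 : e1 \in fE A) (E2 : e2 \in fE A) (E3 : e3 \in fE A).
Hypotheses (U1 : up A e1 = Vx w) (L1 : lo A e1 = Vx c) (L2 : lo A e2 = Vx c).
Hypotheses (N21 : e2 <> e1) (U3 : up A e3 = Vx c).
Hypothesis Hrep : replaced A B (predC (pred2 w c)) [::] (fun _ => Wk)
  (predC [pred e | (e == e1) || (e == e2) || (e == e3)]) [:: f]
  (fun e => if e == f then up A e2 else up A e)
  (fun e => if e == f then lo A e3 else lo A e).
Hypotheses (wfA : well_formed A) (cfA : cycle_free A).

Lemma wk_ctr_e23 : e2 <> e3.
Proof. by move=> E; apply: (no_loop cfA (proj1 Hc) E3 U3); rewrite -E. Qed.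

Lemma wk_ctr_cycle_free : cycle_free B.
Proof.
have [_ [_ [_ [_ [_ [_ [_ [mE _]]]]]]]] := Hrep.
apply: (replaced_cycle_free (phi := id)
  (img := fun e => if e == f then [:: e2; e3] else [:: e]) Hrep) => //.
- by move=> e; rewrite inE => /negbTE ->.
- move=> e; rewrite inE => /eqP ->; rewrite eqxx /= inE andbT; split=> //; split.
    exact/eqP/wk_ctr_e23.
  by move=> x; rewrite !inE => /orP [] /eqP ->; rewrite ?E2 ?E3 !eqxx ?orbT.
- by move=> e e'; rewrite !inE => /eqP -> /eqP ->.
- move=> e He; rewrite !node_map_id; case: ifP => [_|Hn] /=.
    by rewrite L2 U3.
  by case/mE: He => [/andP []//|]; rewrite inE Hn.
Qed.

Lemma wk_ctr_well_formed : well_formed B.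
Proof.
have [_ [_ [_ [_ [_ [fE' [_ [mE _]]]]]]]] := Hrep.
have [uA endA _] := wfA; have [_ wL] := Hw; have [cA cL] := Hc.
have wc : w <> c by move=> E; move: cL; rewrite -E wL.
have nf e : e \in fE A -> (e == f) = false.
  by move=> He; apply: contraTF He => /eqP ->; apply: fE'; rewrite inE.
apply: (replaced_well_formed (RE := [:: e1; e2; e3]) Hrep _ uA) => //.
- by move=> e; rewrite /= !inE orbA.
- have e13 : e1 <> e3 by move=> E; apply: wc; move: U1; rewrite E U3 => [[]].
  rewrite /= !inE !negb_or !andbT -andbA; apply/and3P; split; apply/eqP => //.
  - exact: nesym.
  - exact: wk_ctr_e23.
- by move=> e; rewrite !inE => /or3P [] /eqP ->.
- move=> e v /mE [/andP [HeA HeK]|]; last rewrite inE => /eqP ->; rewrite ?eqxx ?nf // => Hv.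
    left; apply: kept_vertex (endA e v HeA Hv) _ _ => Ev; move: Hv HeK; rewrite Ev !inE.
      case=> [/(lower_edge1 wfA Hw erefl E1 U1 HeA) ->|]; first by rewrite eqxx.
      by move/eqP; rewrite (negbTE (upper_edge0 wfA Hw erefl HeA)).
    case=> [/(lower_edge1 wfA Hc erefl E3 U3 HeA) ->|]; first by rewrite !eqxx !orbT.
    by case/(upper_edge2 wfA Hc erefl E1 L1 E2 L2 (nesym N21) HeA) => ->; rewrite eqxx ?orbT.
  left; apply: kept_vertex.
  + by case: Hv => Hv; [apply: (endA e2 v E2); left|apply: (endA e3 v E3); right].
  + move=> Ev; rewrite Ev in Hv; case: Hv => [/(lower_edge1 wfA Hw erefl E1 U1 E2)//|/eqP].
    by rewrite (negbTE (upper_edge0 wfA Hw erefl E3)).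
  + move=> Ev; rewrite Ev in Hv; case: Hv => Hv; first exact: no_loop cfA cA E2 Hv L2.
    exact: no_loop cfA cA E3 U3 Hv.
- by move=> v _ _ e He _; rewrite nf.
- move=> v _; rewrite /= negb_or => /andP [Hvw Hvc].
  by rewrite /= eqxx L1 L2 U1 U3 !eq_Vx ![_ == v]eq_sym (negbTE Hvw) (negbTE Hvc) !addn0.
Qed.

Lemma wk_ctr_preserves : well_formed B /\ cycle_free B.
Proof. by split; [exact: wk_ctr_well_formed|exact: wk_ctr_cycle_free]. Qed.

End WeakeningContraction.

Section WeakeningCut.

Variables (A B : flow) (w k e1 e2 u : nat).
Hypotheses (Hw : isv A w Wk) (Hk : isv A k Cut) (E1 : e1 \in fE A) (E2 : e2 \in fE A).
Hypotheses (U1 : up A e1 = Vx w) (L1 : lo A e1 = Vx k) (L2 : lo A e2 = Vx k) (N21 : e2 <> e1).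
Hypothesis Hrep : replaced A B (predC (pred2 w k)) [:: u] (fun _ => Cowk)
  (predC (pred1 e1)) [::] (up A) (fun e => if e == e2 then Vx u else lo A e).
Hypotheses (wfA : well_formed A) (cfA : cycle_free A).

Lemma wk_cut_fresh v : v \in fV A -> (v == u) = false.
Proof.
have [_ [_ [_ [_ [fV' _]]]]] := Hrep.
by move=> Hv; apply: contraTF Hv => /eqP ->; apply: fV'; rewrite inE.
Qed.

Lemma wk_cut_kept_edge e : e \in fE B -> (e \in fE A) && (e != e1).
Proof. by have [_ [_ [_ [_ [_ [_ [_ [mE _]]]]]]]] := Hrep; case/mE. Qed.

Lemma wk_cut_cycle_free : cycle_free B.
Proof.
set phi := fun x => if x == u then k else x.
have phi_id : {in fV A, phi =1 id} by move=> v /wk_cut_fresh Hv; rewrite /phi Hv.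
apply: (replaced_cycle_free (phi := phi) (img := fun e => [:: e]) Hrep) => //.
- by move=> v; rewrite /phi inE => /negbTE ->.
- by move=> v; rewrite inE /phi => /eqP ->; rewrite eqxx; case: Hk.
- move=> e /wk_cut_kept_edge /andP [HeA _].
  have [-> Hl] := node_map_ends wfA HeA phi_id; split=> //; split=> //.
  by case: ifP => [/eqP -> /=|_]; rewrite /phi ?eqxx ?L2.
Qed.

Lemma wk_cut_well_formed : well_formed B.
Proof.
have [_ [uE [_ [_ [_ [_ [_ [mE _]]]]]]]] := Hrep.
have [uA endA _] := wfA.
have not_u e : e \in fE B -> up A e != Vx u /\ lo A e != Vx u.
  move=> /wk_cut_kept_edge /andP [He _].
  split; apply/eqP => Hx; [move: (endA e u He (or_introl Hx))|move: (endA e u He (or_intror Hx))];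
    by move/wk_cut_fresh; rewrite eqxx.
apply: (replaced_well_formed (RE := [:: e1]) Hrep _ uA) => //.
- by move=> e; rewrite /= !inE.
- by move=> e; rewrite inE => /eqP ->.
- move=> e v /wk_cut_kept_edge /andP [HeA HeK]; case=> [Hv|].
  + left; apply: kept_vertex (endA e v HeA (or_introl Hv)) _ _ => Ev; rewrite Ev in Hv.
      by move: HeK; rewrite (lower_edge1 wfA Hw erefl E1 U1 HeA Hv) eqxx.
    by move: Hv => /eqP; rewrite (negbTE (lower_edge0 wfA Hk erefl HeA)).
  + case: ifP => [_ [<-]|Hn Hv]; first by right; rewrite inE.
    left; apply: kept_vertex (endA e v HeA (or_intror Hv)) _ _ => Ev; rewrite Ev in Hv.
      by move: Hv => /eqP; rewrite (negbTE (upper_edge0 wfA Hw erefl HeA)).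
    have [] := upper_edge2 wfA Hk erefl E1 L1 E2 L2 (nesym N21) HeA Hv => E.
      by move: HeK; rewrite E eqxx.
    by move: Hn; rewrite E eqxx.
- move=> v HvA; rewrite /= negb_or => /andP [_ Hvk] e _ _; split=> //.
  case: ifP => [/eqP ->|//].
  by rewrite L2 !eq_Vx ![_ == v]eq_sym wk_cut_fresh // (negbTE Hvk).
- move=> v _; rewrite /= negb_or => /andP [Hvw Hvk].
  by rewrite L1 U1 !eq_Vx ![_ == v]eq_sym (negbTE Hvw) (negbTE Hvk).
- move=> v; rewrite inE => /eqP ->; split.
  + apply: (count_in_pred1 (a := e2) uE) => [|e He].
      by apply/mE; left; rewrite /= E2; apply/eqP.
    by case: ifP => _; rewrite ?eqxx // (negbTE (not_u e He).2).
  + by apply: count_in_pred0 => e /not_u [].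
Qed.

Lemma wk_cut_preserves : well_formed B /\ cycle_free B.
Proof. by split; [exact: wk_cut_well_formed|exact: wk_cut_cycle_free]. Qed.

End WeakeningCut.

Section WeakeningCoweakening.

Variables (A B : flow) (w cw e : nat).
Hypotheses (Hw : isv A w Wk) (Hcw : isv A cw Cowk) (E : e \in fE A).
Hypotheses (U : up A e = Vx w) (L : lo A e = Vx cw).
Hypothesis Hrep : replaced A B (predC (pred2 w cw)) [::] (fun _ => Wk)
  (predC (pred1 e)) [::] (up A) (lo A).
Hypotheses (wfA : well_formed A) (cfA : cycle_free A).

Lemma wk_cowk_kept_edge e' : e' \in fE B -> (e' \in fE A) && (e' != e).
Proof.
have [_ [_ [_ [_ [_ [_ [_ [mE _]]]]]]]] := Hrep.
by case/mE => [/andP [-> /=]|]; rewrite ?inE.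
Qed.

Lemma wk_cowk_cycle_free : cycle_free B.
Proof.
apply: (replaced_cycle_free (phi := id) (img := fun e => [:: e]) Hrep) => // e' He'.
by rewrite !node_map_id /=; case/andP: (wk_cowk_kept_edge He').
Qed.

Lemma wk_cowk_well_formed : well_formed B.
Proof.
have [uA endA _] := wfA.
apply: (replaced_well_formed (RE := [:: e]) Hrep _ uA) => //.
- by move=> e'; rewrite /= !inE.
- by move=> e'; rewrite inE => /eqP ->.
- move=> e' v /wk_cowk_kept_edge /andP [He' Hne] Hv; left.
  apply: kept_vertex (endA e' v He' Hv) _ _ => Ev; rewrite Ev in Hv; case: Hv => Hv.
  + by move: Hne; rewrite (lower_edge1 wfA Hw erefl E U He' Hv) eqxx.
  + by move: Hv => /eqP; rewrite (negbTE (upper_edge0 wfA Hw erefl He')).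
  + by move: Hv => /eqP; rewrite (negbTE (lower_edge0 wfA Hcw erefl He')).
  + by move: Hne; rewrite (upper_edge1 wfA Hcw erefl E L He' Hv) eqxx.
- move=> v _; rewrite /= negb_or => /andP [Hvw Hvc].
  by rewrite L U !eq_Vx ![_ == v]eq_sym (negbTE Hvw) (negbTE Hvc).
Qed.

Lemma wk_cowk_preserves : well_formed B /\ cycle_free B.
Proof. by split; [exact: wk_cowk_well_formed|exact: wk_cowk_cycle_free]. Qed.

End WeakeningCoweakening.

Section WeakeningCocontraction.

Variables (A B : flow) (w cc e0 e1 e2 u1 u2 : nat).
Hypotheses (Hw : isv A w Wk) (Hcc : isv A cc Coctr).
Hypotheses (E0 : e0 \in fE A) (E1 : e1 \in fE A) (E2 : e2 \in fE A).
Hypotheses (U0 : up A e0 = Vx w) (L0 : lo A e0 = Vx cc).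
Hypotheses (U1 : up A e1 = Vx cc) (U2 : up A e2 = Vx cc) (N12 : e1 <> e2).
Local Notation new_up :=
  (fun e => if e == e1 then Vx u1 else if e == e2 then Vx u2 else up A e).
Hypothesis Hrep : replaced A B (predC (pred2 w cc)) [:: u1; u2] (fun _ => Wk)
  (predC (pred1 e0)) [::] new_up (lo A).
Hypotheses (wfA : well_formed A) (cfA : cycle_free A).

Lemma wk_coctr_fresh v : v \in fV A -> v \notin [:: u1; u2].
Proof. by have [_ [_ [_ [_ [fV' _]]]]] := Hrep; apply: contraTN => /fV'. Qed.

Lemma wk_coctr_kept_edge e : e \in fE B -> (e \in fE A) && (e != e0).
Proof. by have [_ [_ [_ [_ [_ [_ [_ [mE _]]]]]]]] := Hrep; case/mE. Qed.

Lemma wk_coctr_not_new e x : e \in fE B -> x \in [:: u1; u2] ->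
  up A e != Vx x /\ lo A e != Vx x.
Proof.
have [_ endA _] := wfA; move=> /wk_coctr_kept_edge /andP [He _] Hx.
split; apply/eqP => Hex; [move: (endA e x He (or_introl Hex))|move: (endA e x He (or_intror Hex))];
  by move/wk_coctr_fresh; rewrite Hx.
Qed.

Lemma wk_coctr_cycle_free : cycle_free B.
Proof.
set phi := fun x => if x \in [:: u1; u2] then cc else x.
have phi_id : {in fV A, phi =1 id} by move=> v /wk_coctr_fresh /negbTE Hv; rewrite /phi Hv.
apply: (replaced_cycle_free (phi := phi) (img := fun e => [:: e]) Hrep) => //.
- by move=> v /negbTE Hv; rewrite /phi Hv.
- by move=> v Hv; rewrite /phi Hv; case: Hcc.
- move=> e /wk_coctr_kept_edge /andP [HeA _].
  have [Hu ->] := node_map_ends wfA HeA phi_id; split=> //; split=> //.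
  case: ifP => [/eqP -> /=|_]; first by rewrite /phi mem_head U1.
  by case: ifP => [/eqP -> /=|_]; rewrite // /phi !inE eqxx orbT U2.
Qed.

Lemma wk_coctr_new_degrees v : v \in [:: u1; u2] ->
  count (fun e => lo A e == Vx v) (fE B) = 0 /\
  count (fun e => new_up e == Vx v) (fE B) = 1.
Proof.
have [_ [uE [unV [_ [_ [_ [_ [mE _]]]]]]]] := Hrep.
have u12 : (u1 == u2) = false by move: unV; rewrite /= inE andbT => /negbTE.
have wc : w <> cc by move=> E; case: Hw => _; case: Hcc => _; rewrite E => ->.
have inB e : e \in fE A -> up A e = Vx cc -> e \in fE B.
  move=> He Hu; apply/mE; left; rewrite /= He; apply/eqP => E.
  by apply: wc; move: U0; rewrite -E Hu => -[->].
move=> Hv; split; first by apply: count_in_pred0 => e /wk_coctr_not_new /(_ Hv) [].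
have up_new e : e \in fE B -> (up A e == Vx v) = false.
  by move=> He; apply/negbTE; case: (wk_coctr_not_new He Hv).
move: (Hv); rewrite !inE => /orP [/eqP Ev|/eqP Ev]; subst v.
- apply: (count_in_pred1 (a := e1) uE (inB _ E1 U1)) => e He.
  case: ifP => _; first by rewrite eqxx.
  by case: ifP => _; [rewrite eq_Vx eq_sym u12|rewrite up_new].
- apply: (count_in_pred1 (a := e2) uE (inB _ E2 U2)) => e He.
  case: ifP => [/eqP ->|_]; first by rewrite eq_Vx u12; apply/esym/negbTE/eqP.
  by case: ifP => _; [rewrite eqxx|rewrite up_new].
Qed.

Lemma wk_coctr_well_formed : well_formed B.
Proof.
have [uA endA _] := wfA.
apply: (replaced_well_formed (RE := [:: e0]) Hrep _ uA) => //.
- by move=> e; rewrite /= !inE.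
- by move=> e; rewrite inE => /eqP ->.
- move=> e v /wk_coctr_kept_edge /andP [He Hne] [|Hv]; last first.
    left; apply: kept_vertex (endA e v He (or_intror Hv)) _ _ => Ev; rewrite Ev in Hv.
      by move: Hv => /eqP; rewrite (negbTE (upper_edge0 wfA Hw erefl He)).
    by move: Hne; rewrite (upper_edge1 wfA Hcc erefl E0 L0 He Hv) eqxx.
  case: ifP => [_ [<-]|Hn1]; first by right; rewrite mem_head.
  case: ifP => [_ [<-]|Hn2 Hv]; first by right; rewrite !inE eqxx orbT.
  left; apply: kept_vertex (endA e v He (or_introl Hv)) _ _ => Ev; rewrite Ev in Hv.
    by move: Hne; rewrite (lower_edge1 wfA Hw erefl E0 U0 He Hv) eqxx.
  by case: (lower_edge2 wfA Hcc erefl E1 U1 E2 U2 N12 He Hv) => E; rewrite E eqxx in Hn1 Hn2.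
- move=> v HvA; rewrite /= negb_or => /andP [_ Hvc] e _ _; split=> //.
  have := wk_coctr_fresh HvA; rewrite !inE => /norP [n1 n2].
  have cv : (Vx cc == Vx v) = false by rewrite eq_Vx eq_sym (negbTE Hvc).
  case: ifP => [/eqP ->|_]; first by rewrite U1 cv eq_Vx eq_sym (negbTE n1).
  by case: ifP => [/eqP ->|_]; rewrite // U2 cv eq_Vx eq_sym (negbTE n2).
- move=> v _; rewrite /= negb_or => /andP [Hvw Hvc].
  by rewrite L0 U0 !eq_Vx ![_ == v]eq_sym (negbTE Hvw) (negbTE Hvc).
- exact: wk_coctr_new_degrees.
Qed.

Lemma wk_coctr_preserves : well_formed B /\ cycle_free B.
Proof. by split; [exact: wk_coctr_well_formed|exact: wk_coctr_cycle_free]. Qed.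

End WeakeningCocontraction.

Lemma cowk_coctr_preserves A B cw cc e1 e0 e2 f :
  isv A cw Cowk -> isv A cc Coctr -> e1 \in fE A -> e0 \in fE A -> e2 \in fE A ->
  up A e1 = Vx cc -> lo A e1 = Vx cw -> lo A e0 = Vx cc -> up A e2 = Vx cc -> e2 <> e1 ->
  replaced A B (predC (pred2 cw cc)) [::] (fun _ => Wk)
    (predC [pred e | (e == e0) || (e == e1) || (e == e2)]) [:: f]
    (fun e => if e == f then up A e0 else up A e)
    (fun e => if e == f then lo A e2 else lo A e) ->
  well_formed A -> cycle_free A -> well_formed B /\ cycle_free B.
Proof.
move=> Hcw Hcc E1 E0 E2 U1 L1 L0 U2 N21 Hrep; apply: step_flip.
apply: (wk_ctr_preserves (isv_flip Hcw) (isv_flip Hcc) E1 E2 E0 (congr1 dual_node L1)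
  (congr1 dual_node U1) (congr1 dual_node U2) N21 (congr1 dual_node L0)).
apply: replaced_ext (replaced_dual (is_dual_flip A) (is_dual_flip B) Hrep) => //.
- by move=> e /=; case: (e == e0); case: (e == e1); case: (e == e2).
- by move=> e /=; case: ifP.
- by move=> e /=; case: ifP.
Qed.

Lemma int_cowk_preserves A B i cw e1 e2 u :
  isv A i Int -> isv A cw Cowk -> e1 \in fE A -> e2 \in fE A ->
  up A e1 = Vx i -> lo A e1 = Vx cw -> up A e2 = Vx i -> e2 <> e1 ->
  replaced A B (predC (pred2 i cw)) [:: u] (fun _ => Wk) (predC (pred1 e1)) [::]
    (fun e => if e == e2 then Vx u else up A e) (lo A) ->
  well_formed A -> cycle_free A -> well_formed B /\ cycle_free B.
Proof.
move=> Hi Hcw E1 E2 U1 L1 U2 N21 Hrep; apply: step_flip.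
apply: (wk_cut_preserves (isv_flip Hcw) (isv_flip Hi) E1 E2 (congr1 dual_node L1)
  (congr1 dual_node U1) (congr1 dual_node U2) N21).
apply: replaced_ext (replaced_dual (is_dual_flip A) (is_dual_flip B) Hrep) => //.
- by move=> v /=; rewrite orbC.
- by move=> e /=; case: ifP.
Qed.

Lemma cowk_ctr_preserves A B cw c e0 e1 e2 u1 u2 :
  isv A cw Cowk -> isv A c Ctr -> e0 \in fE A -> e1 \in fE A -> e2 \in fE A ->
  up A e0 = Vx c -> lo A e0 = Vx cw -> lo A e1 = Vx c -> lo A e2 = Vx c -> e1 <> e2 ->
  replaced A B (predC (pred2 cw c)) [:: u1; u2] (fun _ => Cowk) (predC (pred1 e0)) [::]
    (up A) (fun e => if e == e1 then Vx u1 else if e == e2 then Vx u2 else lo A e) ->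
  well_formed A -> cycle_free A -> well_formed B /\ cycle_free B.
Proof.
move=> Hcw Hc E0 E1 E2 U0 L0 L1 L2 N12 Hrep; apply: step_flip.
apply: (wk_coctr_preserves (isv_flip Hcw) (isv_flip Hc) E0 E1 E2 (congr1 dual_node L0)
  (congr1 dual_node U0) (congr1 dual_node L1) (congr1 dual_node L2) N12).
apply: replaced_ext (replaced_dual (is_dual_flip A) (is_dual_flip B) Hrep) => //.
by move=> e /=; case: ifP => //; case: ifP.
Qed.

Lemma wstep_preserves A B : wstep A B ->
  well_formed A -> cycle_free A -> well_formed B /\ cycle_free B.
Proof.
case=> [[? [? [? [? [? [? [H1 [H2 [H3 [H4 [H5 [H6 [H7 [H8 [H9 [H10 H11]]]]]]]]]]]]]]]]|].
  exact: wk_ctr_preserves H1 H2 H3 H4 H5 H6 H7 H8 H9 H10 H11.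
case=> [[? [? [? [? [? [? [H1 [H2 [H3 [H4 [H5 [H6 [H7 [H8 [H9 [H10 H11]]]]]]]]]]]]]]]]|].
  exact: cowk_coctr_preserves H1 H2 H3 H4 H5 H6 H7 H8 H9 H10 H11.
case=> [[? [? [? [? [? [H1 [H2 [H3 [H4 [H5 [H6 [H7 [H8 H9]]]]]]]]]]]]]|].
  exact: wk_cut_preserves H1 H2 H3 H4 H5 H6 H7 H8 H9.
case=> [[? [? [? [? [? [H1 [H2 [H3 [H4 [H5 [H6 [H7 [H8 H9]]]]]]]]]]]]]|].
  exact: int_cowk_preserves H1 H2 H3 H4 H5 H6 H7 H8 H9.
case=> [[? [? [? [H1 [H2 [H3 [H4 [H5 H6]]]]]]]]|].
  exact: wk_cowk_preserves H1 H2 H3 H4 H5 H6.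
case=> [[? [? [? [? [? [? [? [H1 [H2 [H3 [H4 [H5 [H6 [H7 [H8 [H9 [H10 H11]]]]]]]]]]]]]]]]]|].
  exact: wk_coctr_preserves H1 H2 H3 H4 H5 H6 H7 H8 H9 H10 H11.
case=> [? [? [? [? [? [? [? [H1 [H2 [H3 [H4 [H5 [H6 [H7 [H8 [H9 [H10 H11]]]]]]]]]]]]]]]]].
exact: cowk_ctr_preserves H1 H2 H3 H4 H5 H6 H7 H8 H9 H10 H11.
Qed.

Lemma wstar_preserves A B : wstar A B ->
  well_formed A -> cycle_free A -> well_formed B /\ cycle_free B.
Proof.
elim=> [x y /wstep_preserves //|//|x y z _ IHxy _ IHyz wfx cfx].
by have [wfy cfy] := IHxy wfx cfx; exact: IHyz.
Qed.

Theorem proposition4p14 (A B : flow) :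
  is_flow A -> cycle_free A -> wstar A B -> cycle_free B.
Proof.
move=> /is_flow_well_formed wfA cfA AB.
exact: (wstar_preserves AB wfA cfA).2.
Qed.
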